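(* Let $G=(\mathcal{V},\mathcal{E})$, the corrupt set $\mathcal{V}_c$, and the other graph notation be as in the context, and assume every honest node has at least one corrupt neighbour. Let $p$ be an integer larger than any possible value of $\sum_{j\in\mathcal{V}}S_j$, and let the private data $S_1,\dots,S_n$ be mutually independent random variables with values in $\{0,\dots,p-1\}$. For every ordered pair $(i,j)$ with $j\in\mathcal{N}_i$ let $R_i^j$ be uniform on $\mathbb{Z}_p$, all these mutually independent and independent of $(S_1,\dots,S_n)$; set $R_i^i=S_i-\sum_{j\in\mathcal{N}_i}R_i^j\bmod p$ and $$S_i'=R_i^i+\textstyle\sum_{j\in\mathcal{N}_i}R_j^i \bmod p\ \in\{0,\dots,p-1\}.$$ Run the following iteration with inputs $S_i'$ (viewed as real numbers), constants $c>0$, $\theta\in[0,1)$, and initialization $z_{i|j}^{(0)}=0$: for $t\ge 0$, $$x_i^{(t+1)}=\frac{S_i'-\sum_{j\in\mathcal{N}_i}B_{i|j}z_{i|j}^{(t)}}{1+c\,d_i},\qquad z_{j|i}^{(t+1)}=\theta z_{j|i}^{(t)}+(1-\theta)\big(z_{i|j}^{(t)}+2cB_{i|j}x_i^{(t+1)}\big)\ \ (j\in\mathcal{N}_i).$$ Let the adversary's view be $\mathcal{O}=\{S_j\}_{j\in\mathcal{V}_c}\cup\{R_j^k,R_k^j\}_{\{j,k\}\in\mathcal{E}_c}\cup\{X^{(t)}\}_{t\ge1}$, where $X^{(t)}=(x_1^{(t)},\dots,x_n^{(t)})$. Then for every honest node $i\in\mathcal{V}_h$, $$\mathrm{I}(S_i;\mathcal{O})=\mathrm{I}\Big(S_i;\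 \textstyle\sum_{j\in\mathcal{V}_{h,1}}S_j\Big).$$
   Context: $G=(\mathcal{V},\mathcal{E})$ is a connected undirected graph, $\mathcal{V}=\{1,\dots,n\}$, $\mathcal{N}_i$ the neighbours of $i$, $d_i=|\mathcal{N}_i|$. For an edge $\{i,j\}$ with $i<j$: $B_{i|j}=1$, $B_{j|i}=-1$. $\mathcal{V}_c\subseteq\mathcal{V}$ is the set of corrupt nodes, $\mathcal{V}_h=\mathcal{V}\setminus\mathcal{V}_c$ the honest nodes, $\mathcal{E}_h$ the edges with both endpoints honest, $\mathcal{E}_c=\mathcal{E}\setminus\mathcal{E}_h$, $G_h=(\mathcal{V}_h,\mathcal{E}_h)$, and $\mathcal{V}_{h,1}$ is the vertex set of the connected component of $G_h$ containing the considered honest node $i$. $\mathrm{I}$ denotes mutual information. *)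

From HB Require Import structures.
From mathcomp Require Import all_boot all_order all_algebra.
From mathcomp Require Import intdiv boolp reals exp.
Set Implicit Arguments. Unset Strict Implicit. Unset Printing Implicit Defensive.
Import Order.TTheory GRing.Theory Num.Theory.
Local Open Scope ring_scope.

Section Defs.
Variable R : realType.

Definition is_pmf (T : finType) (P : T -> R) :=
  (forall w, 0 <= P w) /\ \sum_(w : T) P w = 1.

Definition Pr (T : finType) (P : T -> R) (A : T -> Prop) : R :=
  \sum_(w : T) (if `[< A w >] then P w else 0).

(* mutual information (in nats) of two discrete random variables X, Y on a
   finite probability space, with values in arbitrary types:
   I(X;Y) = E[ ln (P(X=x,Y=y) / (P(X=x) P(Y=y))) ] *)
Definition MI (T : finType) (P : T -> R) (A B : Type) (X : T -> A) (Y : T -> B) : R :=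
  \sum_(w : T) P w *
    ln (Pr P (fun v => X v = X w /\ Y v = Y w) /
        (Pr P (fun v => X v = X w) * Pr P (fun v => Y v = Y w))).

Definition Bsgn (n : nat) (i j : 'I_n) : R := if (i < j)%N then 1 else -1.

Definition degree (n : nat) (adj : rel 'I_n) (i : 'I_n) : nat := #|[pred j | adj i j]|.

Definition adj_honest (n : nat) (adj : rel 'I_n) (Vc : {set 'I_n}) : rel 'I_n :=
  [rel u v | [&& adj u v, u \notin Vc & v \notin Vc]].

Definition honest_component (n : nat) (adj : rel 'I_n) (Vc : {set 'I_n}) (i : 'I_n)
  : {set 'I_n} := [set j | connect (adj_honest adj Vc) i j].

Definition Rself (n p : nat) (adj : rel 'I_n) (s : 'I_n -> nat) (r : 'I_n -> 'I_n -> nat)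
  (i : 'I_n) : int :=
  (((s i)%:Z - \sum_(j | adj i j) (r i j)%:Z) %% (p%:Z))%Z.

Definition Sshare (n p : nat) (adj : rel 'I_n) (s : 'I_n -> nat) (r : 'I_n -> 'I_n -> nat)
  (i : 'I_n) : int :=
  ((Rself p adj s r i + \sum_(j | adj i j) (r j i)%:Z) %% (p%:Z))%Z.

(* x-update given inputs s and current z (z i j = z_{i|j}) *)
Definition xupd (n : nat) (adj : rel 'I_n) (c : R) (s : 'I_n -> R)
  (z : 'I_n -> 'I_n -> R) (i : 'I_n) : R :=
  (s i - \sum_(j | adj i j) Bsgn i j * z i j) / (1 + c * (degree adj i)%:R).

(* zseq t = z^(t); z^(0) = 0; entries off the edges are irrelevant (kept 0) *)
Fixpoint zseq (n : nat) (adj : rel 'I_n) (c theta : R) (s : 'I_n -> R) (t : nat)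
  : 'I_n -> 'I_n -> R :=
  match t with
  | 0 => fun _ _ => 0
  | t'.+1 =>
      let z := zseq adj c theta s t' in
      fun j i => if adj i j then
                   theta * z j i + (1 - theta) * (z i j + 2 * c * Bsgn i j * xupd adj c s z i)
                 else 0
  end.

(* xseq t = X^(t+1) *)
Definition xseq (n : nat) (adj : rel 'I_n) (c theta : R) (s : 'I_n -> R) (t : nat)
  : 'I_n -> R := xupd adj c s (zseq adj c theta s t).

End Defs.

From HB Require Import structures.
From mathcomp Require Import all_boot all_order all_algebra.
From mathcomp Require Import intdiv boolp reals exp.
From mathcomp Require Import ring.
Import Order.TTheory GRing.Theory Num.Theory.
Local Open Scope ring_scope.
Set Implicit Arguments. Unset Strict Implicit. Unset Printing Implicit Defensive.

(* Everything the adversary sees is determined by, and determines, the corrupt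
   inputs, the randomness on corrupt edges and the vector of shares S': the
   first iterate is X^(1) = S' / (1 + c d) and all later ones are functions of
   S'.  Moving an amount k from an honest node u to an honest neighbour v while
   replacing R_u^v by R_u^v - k leaves every share unchanged, so along honest
   paths the honest inputs can be rearranged at will inside the honest
   component H of i, keeping only their sum over H.  Hence, for fixed inputs,
   the number of edge-randomness values producing a given view depends on the
   inputs inside H only through their sum, and it vanishes unless that sum is
   the true one: summed over H, the shares differ from the inputs only by
   randomness on edges leaving H, which are corrupt, and p exceeds all sums.
   Swapping the H-parts of two input vectors then shows that S_i and the view
   are independent given the sum over H, which gives equal mutual information. *)

Section ZpRepresentatives.
Variable p' : nat.
Local Notation Zp := 'I_p'.+1.

Definition represents (a : Zp) (e : int) := (val a)%:Z = (e %% (p'.+1)%:Z)%Z.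

Lemma represents_val (a : Zp) : represents a (val a)%:Z.
Proof. by rewrite /represents modz_nat modn_small ?ltn_ord. Qed.

Lemma representsD a b e f :
  represents a e -> represents b f -> represents (a + b) (e + f).
Proof.
rewrite /represents => ha hb.
have -> : (val (a + b))%:Z = (((val a + val b)%N)%:Z %% (p'.+1)%:Z)%Z.
  by rewrite modz_nat.
by rewrite PoszD ha hb modzDml modzDmr.
Qed.

Lemma representsN a e : represents a e -> represents (- a) (- e).
Proof.
rewrite /represents => ha.
have -> : (val (- a))%:Z = (((p'.+1 - val a)%N)%:Z %% (p'.+1)%:Z)%Z.
  by rewrite modz_nat.
by rewrite -subzn ?modzDl ?ha ?modzNm // ltnW // ltn_ord.
Qed.

Lemma representsB a b e f :
  represents a e -> represents b f -> represents (a - b) (e - f).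
Proof. by move=> ha hb; apply: representsD ha (representsN hb). Qed.

Lemma represents_sum (I : finType) (Q : pred I) (F : I -> Zp) (G : I -> int) :
  (forall j, Q j -> represents (F j) (G j)) ->
  represents (\sum_(j | Q j) F j) (\sum_(j | Q j) G j).
Proof.
move=> FG; elim/big_rec2: _ => [|j a e Qj]; first by rewrite /represents mod0z.
exact: representsD (FG _ Qj).
Qed.

Lemma val_Zp_sum (I : finType) (Q : pred I) (F : I -> Zp) :
  val (\sum_(j | Q j) F j) = ((\sum_(j | Q j) val (F j)) %% p'.+1)%N.
Proof.
have := represents_sum (fun j _ => represents_val (F j)) (Q := Q).
rewrite /represents -(big_morph (fun m : nat => m%:Z) PoszD (erefl 0%:Z)) modz_nat.
by case.
Qed.

End ZpRepresentatives.

Section Shares.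
Variables (n : nat) (adj : rel 'I_n) (Vc : {set 'I_n}) (p' : nat).
Hypothesis adj_sym : symmetric adj.
Local Notation Zp := 'I_p'.+1.

Definition share (x : 'I_n -> Zp) (r : 'I_n -> 'I_n -> Zp) (l : 'I_n) : Zp :=
  x l - \sum_(j | adj l j) r l j + \sum_(j | adj l j) r j l.

Lemma Sshare_share x r l :
  Sshare p'.+1 adj (fun j => val (x j)) (fun j k => val (r j k)) l =
  (val (share x r l))%:Z.
Proof.
have rep_share : represents (share x r l)
    ((val (x l))%:Z - \sum_(j | adj l j) (val (r l j))%:Z
       + \sum_(j | adj l j) (val (r j l))%:Z).
  apply: representsD; first apply: representsB; first exact: represents_val.
  - by apply: represents_sum => j _; apply: represents_val.
  - by apply: represents_sum => j _; apply: represents_val.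
by rewrite /Sshare /Rself rep_share modzDml.
Qed.

(* Each edge inside A contributes its randomness once with each sign. *)
Lemma sum_share (A : {set 'I_n}) x r : \sum_(l in A) share x r l =
  \sum_(l in A) x l - \sum_(l in A) \sum_(j | adj l j && (j \notin A)) r l j
                    + \sum_(l in A) \sum_(j | adj l j && (j \notin A)) r j l.
Proof.
rewrite /share big_split /= sumrB.
have splitA (F : 'I_n -> 'I_n -> Zp) : \sum_(l in A) \sum_(j | adj l j) F l j =
    \sum_(l in A) \sum_(j | adj l j && (j \in A)) F l j +
    \sum_(l in A) \sum_(j | adj l j && (j \notin A)) F l j.
  by rewrite -big_split; apply: eq_bigr => l _; rewrite (bigID (mem A)).
rewrite (splitA (fun l j => r l j)) (splitA (fun l j => r j l)).
have -> : \sum_(l in A) \sum_(j | adj l j && (j \in A)) r j l =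
          \sum_(l in A) \sum_(j | adj l j && (j \in A)) r l j.
  rewrite (exchange_big_dep (mem A)) /=; last by move=> ? ? _ /andP[].
  by apply: eq_bigr => j jA; apply: eq_bigl => l; rewrite adj_sym jA andbT andbC.
set a := \sum_(l in A) x l; set b := \sum_(l in A) _.
set o := \sum_(l in A) _; set i := \sum_(l in A) _.
by rewrite opprD [- b - o]addrC !addrA subrK.
Qed.

Definition edge := {ij : 'I_n * 'I_n | adj ij.1 ij.2}.

Definition edge_fun (r : {ffun edge -> Zp}) (i j : 'I_n) : Zp :=
  if (insub (i, j) : option edge) is Some e then r e else 0.

Lemma edge_funE r i j (ij : adj i j) : edge_fun r i j = r (Sub (i, j) ij).
Proof. by rewrite /edge_fun insubT. Qed.

Lemma edge_fun_nadj r i j : ~~ adj i j -> edge_fun r i j = 0.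
Proof. by move=> ij; rewrite /edge_fun insubF //; apply: negbTE. Qed.

Definition corrupt_edge (e : edge) := ((val e).1 \in Vc) || ((val e).2 \in Vc).

Definition share_equiv (x y : 'I_n -> Zp) :=
  (forall j, j \in Vc -> x j = y j) /\
  exists tau : {ffun edge -> Zp} -> {ffun edge -> Zp}, injective tau /\
    forall r, (forall e, corrupt_edge e -> tau r e = r e) /\
              (forall l, share x (edge_fun r) l = share y (edge_fun (tau r)) l).

Lemma share_equiv_refl x y : x =1 y -> share_equiv x y.
Proof.
move=> xy; split=> [j _|]; first exact: xy.
by exists id; split=> // r; split=> // l; rewrite /share xy.
Qed.

Lemma share_equiv_trans x y z :
  share_equiv x y -> share_equiv y z -> share_equiv x z.
Proof.
move=> [xy [t1 [inj1 ht1]]] [yz [t2 [inj2 ht2]]]; split=> [j jV|].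
  by rewrite xy // yz.
exists (t2 \o t1); split=> [|r]; first exact: inj_comp.
have [fix1 sh1] := ht1 r; have [fix2 sh2] := ht2 (t1 r).
by split=> [e ce | l]; rewrite /= ?fix2 ?fix1 // sh1 sh2.
Qed.

Definition shift (x : 'I_n -> Zp) (u v : 'I_n) (k : Zp) : 'I_n -> Zp :=
  fun l => x l - (if l == u then k else 0) + (if l == v then k else 0).

Lemma sum_if_eq (Q : pred 'I_n) (u : 'I_n) (k : Zp) : Q u ->
  \sum_(l | Q l) (if l == u then k else 0) = k.
Proof. by move=> Qu; rewrite (bigD1 u) //= eqxx big1 ?addr0 // => j /andP[_ /negbTE->]. Qed.

Lemma sum_shift (A : {set 'I_n}) x u v k : u \in A -> v \in A ->
  \sum_(l in A) shift x u v k l = \sum_(l in A) x l.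
Proof. by move=> uA vA; rewrite /shift big_split sumrB /= !sum_if_eq // subrK. Qed.

Definition shift_edge (u v : 'I_n) (k : Zp) (r : {ffun edge -> Zp}) :
  {ffun edge -> Zp} := [ffun e => if val e == (u, v) then r e - k else r e].

Lemma edge_fun_shift_edge u v k r i j : adj u v ->
  edge_fun (shift_edge u v k r) i j =
  edge_fun r i j - (if (i == u) && (j == v) then k else 0).
Proof.
move=> uv; have [ij|nij] := boolP (adj i j).
  by rewrite !edge_funE ffunE SubK xpair_eqE; case: ifP; rewrite ?subr0.
rewrite !edge_fun_nadj //; case: ifP => [/andP[/eqP iu /eqP jv]|_]; last by rewrite subr0.
by move: nij; rewrite iu jv uv.
Qed.

Lemma share_shift_edge x u v k r l : adj u v ->
  share (shift x u v k) (edge_fun (shift_edge u v k r)) l = share x (edge_fun r) l.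
Proof.
move=> uv.
have out : \sum_(j | adj l j) edge_fun (shift_edge u v k r) l j =
           \sum_(j | adj l j) edge_fun r l j - (if l == u then k else 0).
  rewrite (eq_bigr _ (fun j _ => edge_fun_shift_edge k r l j uv)) sumrB.
  congr (_ - _); case: (eqVneq l u) => [->|_] /=; first exact: sum_if_eq.
  by rewrite big1.
have inc : \sum_(j | adj l j) edge_fun (shift_edge u v k r) j l =
           \sum_(j | adj l j) edge_fun r j l - (if l == v then k else 0).
  rewrite (eq_bigr _ (fun j _ => edge_fun_shift_edge k r j l uv)) sumrB.
  congr (_ - _); case: (eqVneq l v) => [->|_] /=.
    by under eq_bigr do rewrite andbT; rewrite sum_if_eq // adj_sym.
  by rewrite big1 // => j _; rewrite andbF.
rewrite /share out inc /shift.
set a := x l; set ku := if _ then _ else _; set kv := if _ then _ else _.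
set o := \sum_(j | _) _; set i := \sum_(j | _) _.
rewrite !opprB [a - ku + kv]addrAC -[a + kv - ku + (ku - o)]addrA addKr.
by rewrite [a + kv - o]addrAC -[a - o + kv + _]addrA [kv + (i - kv)]addrC subrK.
Qed.

Lemma share_equiv_shift_edge x u v k :
  adj_honest adj Vc u v -> share_equiv x (shift x u v k).
Proof.
move=> /and3P[uv uV vV]; split=> [j jV|].
  rewrite /shift ifF ?ifF ?subr0 ?addr0 //.
  - by apply: contraNF vV => /eqP <-.
  - by apply: contraNF uV => /eqP <-.
exists (shift_edge u v k); split=> [r1 r2 /ffunP r12|r].
  by apply/ffunP => e; have := r12 e; rewrite !ffunE; case: ifP => // _ /addIr.
split=> [e|l]; last by rewrite share_shift_edge.
by rewrite /corrupt_edge ffunE; case: ifP => // /eqP -> /=; rewrite (negbTE uV) (negbTE vV).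
Qed.

Lemma share_equiv_shift u v : connect (adj_honest adj Vc) u v ->
  forall x k, share_equiv x (shift x u v k).
Proof.
move/connectP=> [ps pth ->]; elim: ps u pth => [|m ps IH] u /= pth x k.
  by apply: share_equiv_refl => j; rewrite /shift subrK.
case/andP: pth => um pth.
apply: share_equiv_trans (share_equiv_shift_edge x k um) _.
apply: share_equiv_trans (IH m pth (shift x u m k) k) (share_equiv_refl _).
by move=> j; rewrite /shift addrK.
Qed.

Variable i : 'I_n.
Hypothesis i_honest : i \notin Vc.
Local Notation H := (honest_component adj Vc i).

Lemma honest_component_self : i \in H.
Proof. by rewrite inE connect0. Qed.

Lemma honest_component_honest l : l \in H -> l \notin Vc.
Proof.
rewrite inE => il.
have honest_closed : closed (adj_honest adj Vc) [pred v | v \notin Vc].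
  by move=> u v /and3P[_ uV vV]; rewrite !inE uV vV.
by have := closed_connect honest_closed il; rewrite !inE i_honest => <-.
Qed.

Lemma honest_component_boundary l j :
  l \in H -> adj l j -> j \notin H -> j \in Vc.
Proof.
move=> lH lj; apply: contraNT => jV; rewrite inE.
apply: connect_trans (connect1 _); first by rewrite inE in lH; exact: lH.
by rewrite /adj_honest /= lj (honest_component_honest lH) jV.
Qed.

Lemma share_equiv_off_self x y : (forall l, l != i -> x l = y l) ->
  \sum_(l in H) x l = \sum_(l in H) y l -> share_equiv x y.
Proof.
move=> xy sumxy; apply: share_equiv_refl => l.
have [->|] := eqVneq l i; last exact: xy.
move: sumxy; rewrite (bigD1 i honest_component_self).
rewrite [X in _ = X](bigD1 i honest_component_self) /=.
by rewrite (eq_bigr y) => [/addIr|j /andP[_ /xy]].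
Qed.

Lemma share_equiv_transport x y : (forall l, l \notin H -> x l = y l) ->
  \sum_(l in H) x l = \sum_(l in H) y l -> share_equiv x y.
Proof.
pose D x := [set l in H | (l != i) && (x l != y l)].
have [m] := ubnP #|D x|; elim: m x => // m IH x Dm xy_out sumxy.
case: (set_0Vmem (D x)) => [D0|[l0]].
  apply: share_equiv_off_self => // l li; case: (boolP (l \in H)) => [lH|]; last exact: xy_out.
  by apply/eqP; apply: contraT => xyl; rewrite -(in_set0 l) -D0 inE lH li xyl.
rewrite inE => /and3P[l0H l0i xyl0].
pose x' := shift x i l0 (y l0 - x l0).
have x'E l : l != i -> l != l0 -> x' l = x l.
  by move=> li ll0; rewrite /x' /shift (negbTE li) (negbTE ll0) subr0 addr0.
apply: share_equiv_trans (share_equiv_shift _ x (y l0 - x l0)) (IH x' _ _ _).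
- by rewrite inE in l0H.
- rewrite -ltnS (leq_trans _ Dm) // (cardsD1 l0 (D x)) inE l0H l0i xyl0 ltnS.
  apply/subset_leq_card/subsetP => l; rewrite !inE => /and3P[lH li x'l].
  have ll0 : l != l0.
    apply: contraNneq x'l => ->.
    by rewrite /x' /shift (negbTE l0i) eqxx subr0 addrC subrK.
  by rewrite ll0 lH li -(x'E _ li ll0).
- move=> l lH; rewrite x'E ?xy_out //.
  + by apply: contraNneq lH => ->; apply: honest_component_self.
  + by apply: contraNneq lH => ->.
- by rewrite sum_shift ?honest_component_self.
Qed.

End Shares.

Section View.
Variables (R : realType) (n : nat) (adj : rel 'I_n) (Vc : {set 'I_n}).
Variables (p' : nat) (c theta : R).
Hypothesis adj_sym : symmetric adj.
Hypothesis c_gt0 : 0 < c.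
Local Notation Zp := 'I_p'.+1.

Definition share_input (x : 'I_n -> Zp) (r : 'I_n -> 'I_n -> Zp) : 'I_n -> R :=
  fun l => (Sshare p'.+1 adj (fun j => val (x j)) (fun j k => val (r j k)) l)%:~R.

Definition view (x : 'I_n -> Zp) (r : 'I_n -> 'I_n -> Zp) :=
  ((fun j : 'I_n => if j \in Vc then Some (x j) else None,
    fun j k : 'I_n => if adj j k && ((j \in Vc) || (k \in Vc)) then Some (r j k) else None),
   fun t : nat => xseq adj c theta (share_input x r) t).

Lemma xseq0 (s : 'I_n -> R) l :
  xseq adj c theta s 0 l = s l / (1 + c * (degree adj l)%:R).
Proof. by rewrite /xseq /xupd /= big1 ?subr0 // => j _; rewrite mulr0. Qed.

Lemma eq_view x r y r' :
  (forall j, j \in Vc -> x j = y j) ->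
  (forall j k, adj j k -> (j \in Vc) || (k \in Vc) -> r j k = r' j k) ->
  (forall l, share adj x r l = share adj y r' l) -> view x r = view y r'.
Proof.
move=> xy rr' sh; rewrite /view.
have -> : share_input x r = share_input y r'.
  by apply: funext => l; rewrite /share_input !Sshare_share sh.
congr (_, _, _); apply: funext => j; first by case: ifP => // /xy ->.
by apply: funext => k; case: ifP => // /andP[jk jkV]; rewrite rr'.
Qed.

Lemma view_edge_compat x r r' :
  (forall j k, adj j k -> r j k = r' j k) -> view x r = view x r'.
Proof.
move=> rr'; apply: eq_view => // [j k jk _|l]; first exact: rr'.
rewrite /share; congr (_ - _ + _); apply: eq_bigr => j lj; apply: rr' => //.
by rewrite adj_sym.
Qed.

Lemma view_inj x r y r' : view x r = view y r' ->
  (forall j k, adj j k -> (j \in Vc) || (k \in Vc) -> r j k = r' j k) /\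
  (forall l, share adj x r l = share adj y r' l).
Proof.
case=> _ rr' xs; split=> [j k jk jkV|l].
  by have := congr1 (fun f => f j k) rr'; rewrite /= jk jkV => -[].
have deg_neq0 : 1 + c * (degree adj l)%:R != 0.
  by rewrite gt_eqF // ltr_pwDl // mulr_ge0 // ltW.
have := congr1 (fun f => f 0%N l * (1 + c * (degree adj l)%:R)) xs.
rewrite /= !xseq0 !divfK // /share_input !Sshare_share => /eqP.
by rewrite eqr_int => /eqP[] lval; apply: val_inj.
Qed.

End View.

Section DiscreteProbability.
Variables (R : realType) (T : finType) (P : T -> R).
Hypothesis P_pmf : is_pmf P.

Definition ind (b : Prop) : R := if `[< b >] then 1 else 0.

Lemma indT (b : Prop) : b -> ind b = 1.
Proof. by move=> hb; rewrite /ind asboolT. Qed.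

Lemma indF (b : Prop) : ~ b -> ind b = 0.
Proof. by move=> hb; rewrite /ind asboolF. Qed.

Lemma ind_and a b : ind (a /\ b) = ind a * ind b.
Proof. by rewrite /ind asbool_and; case: `[< a >]; rewrite ?mul1r ?mul0r. Qed.

Lemma Pr_ind A : Pr P A = \sum_w ind (A w) * P w.
Proof. by apply: eq_bigr => w _; rewrite /ind; case: ifP; rewrite ?mul1r ?mul0r. Qed.

Lemma Pr_ge0 A : 0 <= Pr P A.
Proof. by apply: sumr_ge0 => w _; case: ifP => // _; apply: P_pmf.1. Qed.

Lemma Pr_ge A w : A w -> P w <= Pr P A.
Proof.
move=> Aw; rewrite /Pr (bigD1 w) //= asboolT // lerDl.
by apply: sumr_ge0 => v _; case: ifP => // _; apply: P_pmf.1.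
Qed.

Lemma Pr_gt0 A : 0 < Pr P A -> exists2 w, A w & 0 < P w.
Proof.
move=> PrA; apply: contrapT => noA; move: PrA; rewrite lt_def Pr_ind => /andP[+ _].
rewrite big1 ?eqxx // => w _; have [Aw|] := pselect (A w); last by move/indF->; rewrite mul0r.
have := P_pmf.1 w; rewrite le_eqVlt => /orP[/eqP <-|Pw]; first by rewrite mulr0.
by case: noA; exists w.
Qed.

End DiscreteProbability.

Section Privacy.
Variables (R : realType) (n : nat) (adj : rel 'I_n) (Vc : {set 'I_n}).
Variables (p' : nat) (c theta : R) (T : finType) (P : T -> R).
Variables (S : 'I_n -> T -> 'I_p'.+1) (Rr : 'I_n -> 'I_n -> T -> 'I_p'.+1).
Hypothesis adj_sym : symmetric adj.
Hypothesis c_gt0 : 0 < c.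
Hypothesis P_pmf : is_pmf P.
Hypothesis sum_lt_p : forall w, 0 < P w -> (\sum_(j < n) val (S j w) < p'.+1)%N.
Hypothesis data_indep : forall (s : 'I_n -> 'I_p'.+1) (r : 'I_n -> 'I_n -> 'I_p'.+1),
  Pr P (fun w => (forall i, S i w = s i) /\ (forall i j, adj i j -> Rr i j w = r i j))
  = (\prod_(i < n) Pr P (fun w => S i w = s i)) *
    ((p'.+1)%:R^-1) ^+ #|[pred ij : 'I_n * 'I_n | adj ij.1 ij.2]|.
Variable i : 'I_n.
Hypothesis i_honest : i \notin Vc.
Local Notation Zp := 'I_p'.+1.
Local Notation edge := (edge adj).
Local Notation H := (honest_component adj Vc i).
Local Notation view := (view adj Vc c theta).
Local Notation ind := (ind R).

Definition prob_inputs (s : 'I_n -> Zp) : R := \prod_(j < n) Pr P (fun w => S j w = s j).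

Definition prob_edges : R := ((p'.+1)%:R^-1) ^+ #|[pred ij : 'I_n * 'I_n | adj ij.1 ij.2]|.

Definition obs w := view (fun j => S j w) (fun j k => Rr j k w).

Definition sumH (s : 'I_n -> Zp) := (\sum_(j in H) val (s j))%N.

Definition nviews o (s : 'I_n -> Zp) :=
  \sum_(r : {ffun edge -> Zp}) ind (view s (edge_fun r) = o).

Lemma prob_inputs_ge0 s : 0 <= prob_inputs s.
Proof. by apply: prodr_ge0 => j _; apply: Pr_ge0. Qed.

Lemma sum_lt_p_of_prob_inputs x : prob_inputs x != 0 ->
  (\sum_(j < n) val (x j) < p'.+1)%N.
Proof.
move=> px; have : 0 < Pr P (fun w => (forall j, S j w = x j) /\
                                     (forall j k, adj j k -> Rr j k w = x j)).
  by rewrite data_indep mulr_gt0 ?exprn_gt0 ?invr_gt0 ?ltr0n // lt0r px prob_inputs_ge0.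
case/(Pr_gt0 P_pmf) => w [Sx _] /sum_lt_p; congr (_ < _)%N.
by apply: eq_bigr => j _; rewrite Sx.
Qed.

Lemma sumH_le x : (sumH x <= \sum_(j < n) val (x j))%N.
Proof. by rewrite [X in (_ <= X)%N](bigID (mem H)) leq_addr. Qed.

Lemma sum_honest_component_view (x y : 'I_n -> Zp) r r' : view x r = view y r' ->
  \sum_(l in H) x l = \sum_(l in H) y l.
Proof.
case/(view_inj c_gt0) => rr' sh.
have boundary (F G : 'I_n -> 'I_n -> Zp) :
    (forall l j, l \in H -> adj l j -> j \notin H -> F l j = G l j) ->
    \sum_(l in H) \sum_(j | adj l j && (j \notin H)) F l j =
    \sum_(l in H) \sum_(j | adj l j && (j \notin H)) G l j.
  by move=> FG; apply: eq_bigr => l lH; apply: eq_bigr => j /andP[]; apply: FG.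
have : \sum_(l in H) share adj x r l = \sum_(l in H) share adj y r' l.
  by apply: eq_bigr => l _.
rewrite !sum_share // (boundary (fun l j => r l j) (fun l j => r' l j)); last first.
  by move=> l j lH lj jH; rewrite rr' ?(honest_component_boundary i_honest lH lj jH) ?orbT.
rewrite (boundary (fun l j => r j l) (fun l j => r' j l)); first by move=> /addIr /addIr.
move=> l j lH lj jH.
by rewrite rr' ?(honest_component_boundary i_honest lH lj jH) // adj_sym.
Qed.

Lemma nviews_share_equiv o x y : share_equiv adj Vc x y -> nviews o x = nviews o y.
Proof.
move=> [xy [tau [tau_inj htau]]]; rewrite /nviews [RHS](reindex_inj tau_inj).
apply: eq_bigr => r _; have [tau_fix sh] := htau r; congr (ind (_ = o)).
by apply: eq_view => // j k jk jkV; rewrite !(edge_funE _ jk) tau_fix.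
Qed.

Lemma nviews_sumH o x y : (forall l, l \notin H -> x l = y l) -> sumH x = sumH y ->
  nviews o x = nviews o y.
Proof.
move=> xy sumxy; apply/nviews_share_equiv/(share_equiv_transport adj_sym xy).
by apply: val_inj; rewrite !val_Zp_sum; congr (_ %% _)%N.
Qed.

Definition data_at (s : 'I_n -> Zp) (r : {ffun edge -> Zp}) w :=
  (forall j, S j w = s j) /\ (forall j k, adj j k -> Rr j k w = edge_fun r j k).

Lemma sum_data_ind w (G : {ffun 'I_n -> Zp} -> {ffun edge -> Zp} -> R) :
  \sum_(s : {ffun 'I_n -> Zp}) \sum_(r : {ffun edge -> Zp}) G s r * ind (data_at s r w)
  = G [ffun j => S j w] [ffun e : edge => Rr (val e).1 (val e).2 w].
Proof.
set s0 := [ffun j => S j w]; set r0 := [ffun e : edge => Rr (val e).1 (val e).2 w].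
rewrite (bigD1 s0) //= (bigD1 r0) //= indT; last first.
  split=> [j|j k jk]; first by rewrite ffunE.
  by rewrite (edge_funE _ jk) ffunE.
rewrite mulr1 big1 ?addr0 => [|r rr0]; last first.
  rewrite indF ?mulr0 // => -[_ Rr_r]; case/eqP: rr0; apply/ffunP => -[[j k] jk].
  by rewrite ffunE /= (Rr_r _ _ jk) (edge_funE _ jk).
rewrite big1 ?addr0 // => s ss0; apply: big1 => r _.
rewrite indF ?mulr0 // => -[S_s _]; case/eqP: ss0.
by apply/ffunP => j; rewrite ffunE S_s.
Qed.

Lemma Pr_data (F : ('I_n -> Zp) -> ('I_n -> 'I_n -> Zp) -> Prop) :
  (forall s r r', (forall j k, adj j k -> r j k = r' j k) -> F s r = F s r') ->
  Pr P (fun w => F (fun j => S j w) (fun j k => Rr j k w)) =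
  prob_edges * \sum_(s : {ffun 'I_n -> Zp}) \sum_(r : {ffun edge -> Zp})
                 ind (F s (edge_fun r)) * prob_inputs s.
Proof.
move=> F_compat.
transitivity (\sum_(s : {ffun 'I_n -> Zp}) \sum_(r : {ffun edge -> Zp})
                ind (F s (edge_fun r)) * Pr P (data_at s r)); last first.
  rewrite mulr_sumr; apply: eq_bigr => s _; rewrite mulr_sumr; apply: eq_bigr => r _.
  by rewrite /data_at data_indep mulrA mulrC.
transitivity (\sum_w \sum_(s : {ffun 'I_n -> Zp}) \sum_(r : {ffun edge -> Zp})
                ind (F s (edge_fun r)) * P w * ind (data_at s r w)); last first.
  rewrite exchange_big; apply: eq_bigr => s _; rewrite exchange_big; apply: eq_bigr => r _.
  by rewrite Pr_ind mulr_sumr; apply: eq_bigr => w _; rewrite mulrCA mulrC.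
rewrite Pr_ind; apply: eq_bigr => w _; rewrite sum_data_ind; congr (ind _ * _).
have -> : ([ffun j => S j w] : 'I_n -> Zp) = (fun j => S j w).
  by apply: funext => j; rewrite ffunE.
by apply: esym; apply: F_compat => j k jk; rewrite (edge_funE _ jk) ffunE.
Qed.

Lemma Pr_inputs (F : ('I_n -> Zp) -> Prop) :
  Pr P (fun w => F (fun j => S j w)) =
  prob_edges * #|{ffun edge -> Zp}|%:R *
    \sum_(s : {ffun 'I_n -> Zp}) ind (F s) * prob_inputs s.
Proof.
rewrite (Pr_data (F := fun s _ => F s)) // -mulrA; congr (_ * _); rewrite mulr_sumr.
by apply: eq_bigr => s _; rewrite sumr_const mulr_natl.
Qed.

Lemma Pr_inputs_obs (F : ('I_n -> Zp) -> Prop) o :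
  Pr P (fun w => F (fun j => S j w) /\ obs w = o) =
  prob_edges * \sum_(s : {ffun 'I_n -> Zp}) ind (F s) * nviews o s * prob_inputs s.
Proof.
rewrite (Pr_data (F := fun s r => F s /\ view s r = o)); last first.
  by move=> s r r' rr'; congr (_ /\ _ = o); apply: view_edge_compat.
congr (_ * _); apply: eq_bigr => s _; rewrite /nviews mulr_sumr mulr_suml.
by apply: eq_bigr => r _; rewrite ind_and.
Qed.

Lemma Pr_obs o :
  Pr P (fun w => obs w = o) =
  prob_edges * \sum_(s : {ffun 'I_n -> Zp}) nviews o s * prob_inputs s.
Proof.
rewrite (Pr_data (F := fun s r => view s r = o)); last first.
  by move=> s r r' rr'; congr (_ = o); apply: view_edge_compat.
by congr (_ * _); apply: eq_bigr => s _; rewrite /nviews mulr_suml.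
Qed.

Definition mix (s t : {ffun 'I_n -> Zp}) : {ffun 'I_n -> Zp} :=
  [ffun j => if j \in H then s j else t j].

Lemma mixK s t : mix (mix s t) (mix t s) = s.
Proof. by apply/ffunP => j; rewrite !ffunE; case: (j \in H). Qed.

Lemma sumH_mix s t : sumH (mix s t) = sumH s.
Proof. by apply: eq_bigr => j jH; rewrite ffunE jH. Qed.

Lemma prob_inputs_mix s t :
  prob_inputs (mix s t) * prob_inputs (mix t s) = prob_inputs s * prob_inputs t.
Proof.
pose pr u (A : pred 'I_n) := \prod_(j < n | A j) Pr P (fun w => S j w = u j).
have prob_split u : prob_inputs u = pr u (mem H) * pr u [predC H].
  by rewrite /prob_inputs (bigID (mem H)).
have mixH u v : pr (mix u v) (mem H) = pr u (mem H).
  by apply: eq_bigr => j jH; rewrite ffunE ifT.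
have mixC u v : pr (mix u v) [predC H] = pr v [predC H].
  by apply: eq_bigr => j; rewrite inE => /negbTE jH; rewrite ffunE jH.
by rewrite !prob_split !mixH !mixC; ring.
Qed.

Section FixedObservation.
Variables (w0 : T) (a : Zp).
Hypothesis P_w0 : 0 < P w0.
Local Notation o := (obs w0).
Local Notation g := (sumH (fun j => S j w0)).

Lemma nviews_eq0 x : prob_inputs x != 0 -> sumH x != g -> nviews o x = 0.
Proof.
move=> px; apply: contraNeq => /eqP nx0.
have [r] : exists r : {ffun edge -> Zp}, view x (edge_fun r) = o.
  apply: contrapT => nor; apply: nx0; apply: big1 => r _.
  by apply: indF => xr; apply: nor; exists r.
move/sum_honest_component_view/(congr1 val); rewrite !val_Zp_sum !modn_small.
- by move/eqP.
- exact: leq_ltn_trans (sumH_le _) (sum_lt_p P_w0).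
- exact: leq_ltn_trans (sumH_le _) (sum_lt_p_of_prob_inputs px).
Qed.

Lemma nviews_swap x y : (forall l, l \notin H -> x l = y l) ->
  prob_inputs x != 0 -> prob_inputs y != 0 ->
  nviews o x * ind (sumH y = g) = ind (sumH x = g) * nviews o y.
Proof.
move=> xy px py; have [exy|nxy] := eqVneq (sumH x) (sumH y).
  by rewrite exy (nviews_sumH o xy exy) mulrC.
have [xg|xg] := eqVneq (sumH x) g.
  have yg : sumH y != g by rewrite -xg eq_sym.
  by rewrite (nviews_eq0 py yg) indF ?mulr0 //; apply/eqP.
by rewrite (nviews_eq0 px xg) (@indF _ (sumH x = g)) ?mul0r ?mulr0 //; apply/eqP.
Qed.

Lemma swap_term s t :
  ind (mix s t i = a) * nviews o (mix s t) * prob_inputs (mix s t) *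
    (ind (sumH (mix t s) = g) * prob_inputs (mix t s)) =
  ind (s i = a /\ sumH s = g) * prob_inputs s * (nviews o t * prob_inputs t).
Proof.
rewrite ind_and ffunE honest_component_self sumH_mix.
transitivity (ind (s i = a) * (nviews o (mix s t) * ind (sumH t = g)) *
              (prob_inputs (mix s t) * prob_inputs (mix t s))); first by ring.
rewrite prob_inputs_mix.
transitivity (ind (s i = a) * (ind (sumH s = g) * nviews o t) *
              (prob_inputs s * prob_inputs t)); last by ring.
have [->|pst] := eqVneq (prob_inputs s * prob_inputs t) 0; first by rewrite !mulr0.
rewrite nviews_swap ?sumH_mix // => [l lH||]; first by rewrite ffunE (negbTE lH).
- by move: pst; rewrite -prob_inputs_mix mulf_eq0 => /norP[].
- by move: pst; rewrite mulf_eq0 => /norP[].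
Qed.

(* (s, t) |-> (mix s t, mix t s) is an involution preserving
   prob_inputs s * prob_inputs t; it maps one integrand onto the other. *)
Lemma swap_identity :
  (\sum_(s : {ffun 'I_n -> Zp}) ind (s i = a) * nviews o s * prob_inputs s) *
  (\sum_(t : {ffun 'I_n -> Zp}) ind (sumH t = g) * prob_inputs t) =
  (\sum_(s : {ffun 'I_n -> Zp}) ind (s i = a /\ sumH s = g) * prob_inputs s) *
  (\sum_(t : {ffun 'I_n -> Zp}) nviews o t * prob_inputs t).
Proof.
rewrite !big_distrlr !pair_bigA /=.
have swap_inj : injective (fun st : {ffun 'I_n -> Zp} * {ffun 'I_n -> Zp} =>
                             (mix st.1 st.2, mix st.2 st.1)).
  by apply: inv_inj => -[s t]; rewrite /= !mixK.
by rewrite [LHS](reindex_inj swap_inj); apply: eq_bigr => -[s t] _; apply: swap_term.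
Qed.

Lemma obs_indep :
  Pr P (fun w => S i w = a /\ obs w = o) * Pr P (fun w => sumH (fun j => S j w) = g) =
  Pr P (fun w => S i w = a /\ sumH (fun j => S j w) = g) * Pr P (fun w => obs w = o).
Proof.
rewrite (Pr_inputs_obs (fun s => s i = a)) (Pr_inputs (fun s => sumH s = g)).
rewrite (Pr_inputs (fun s => s i = a /\ sumH s = g)).
rewrite Pr_obs; set K := prob_edges; set N := #|{ffun edge -> Zp}|%:R.
transitivity (K * K * N *
  ((\sum_(s : {ffun 'I_n -> Zp}) ind (s i = a) * nviews o s * prob_inputs s) *
   (\sum_(t : {ffun 'I_n -> Zp}) ind (sumH t = g) * prob_inputs t))); first by ring.
by rewrite swap_identity; ring.
Qed.

End FixedObservation.

Lemma MI_obs_sumH : MI P (S i) obs = MI P (S i) (fun w => sumH (fun j => S j w)).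
Proof.
rewrite /MI; apply: eq_bigr => w _.
have [<-|P_w] := eqVneq 0 (P w); first by rewrite !mul0r.
have {}P_w : 0 < P w by rewrite lt_def eq_sym P_w P_pmf.1.
congr (_ * ln _); have indep := obs_indep (S i w) P_w.
set A := Pr P _ in indep; set D := Pr P _ in indep.
set C := Pr P _ in indep; set B := Pr P (fun v => obs v = obs w) in indep.
rewrite -/A -/B -/C -/D.
have Pr_neq0 E : E w -> Pr P E != 0.
  by move=> Ew; rewrite gt_eqF // (lt_le_trans P_w (Pr_ge P_pmf Ew)).
have B0 : B != 0 by apply: Pr_neq0.
have D0 : D != 0 by apply: Pr_neq0.
have X0 : Pr P (fun v => S i v = S i w) != 0 by apply: Pr_neq0.
by rewrite -[A](mulfK D0) indep; field; rewrite X0 B0 D0.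
Qed.

End Privacy.

Theorem theorem1 (R : realType) (n : nat) (adj : rel 'I_n) (Vc : {set 'I_n})
  (p : nat) (c theta : R)
  (T : finType) (P : T -> R)
  (S : 'I_n -> T -> 'I_p) (Rr : 'I_n -> 'I_n -> T -> 'I_p) :
  (* G is a connected simple undirected graph *)
  symmetric adj -> irreflexive adj -> (forall u v, connect adj u v) ->
  (* every honest node has a corrupt neighbour *)
  (forall i, i \notin Vc -> exists2 j, adj i j & j \in Vc) ->
  (* probability space *)
  is_pmf P ->
  (* p exceeds every possible value of sum_j S_j *)
  (forall w, 0 < P w -> (\sum_(j < n) val (S j w) < p)%N) ->
  (* S_1..S_n mutually independent; the R_i^j (j in N_i) uniform on Z_p,
     mutually independent and independent of (S_1..S_n) *)
  (forall (s : 'I_n -> 'I_p) (r : 'I_n -> 'I_n -> 'I_p),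
      Pr P (fun w => (forall i, S i w = s i) /\
                     (forall i j, adj i j -> Rr i j w = r i j))
      = (\prod_(i < n) Pr P (fun w => S i w = s i)) *
        (p%:R^-1) ^+ #|[pred ij : 'I_n * 'I_n | adj ij.1 ij.2]|) ->
  0 < c -> 0 <= theta < 1 ->
  let Sp := fun w (i : 'I_n) =>
    (Sshare p adj (fun j => val (S j w)) (fun j k => val (Rr j k w)) i)%:~R : R in
  let O := fun w =>
    ((fun j : 'I_n => if j \in Vc then Some (S j w) else None),
     (fun j k : 'I_n => if adj j k && ((j \in Vc) || (k \in Vc))
                        then Some (Rr j k w) else None),
     (fun t : nat => xseq adj c theta (Sp w) t)) in
  forall i : 'I_n, i \notin Vc ->
    MI P (S i) O =
    MI P (S i) (fun w => (\sum_(j in honest_component adj Vc i) val (S j w))%N).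
Proof.
(* For p = 0 the input type 'I_0 is empty, so P cannot have mass 1. *)
case: p S Rr => [|p'] S Rr adj_sym _ _ _ P_pmf sum_lt_p data_indep c_gt0 _ Sp O i i_honest.
  have [w _|T0] := pickP (fun _ : T => true); first by case: (S i w).
  have := P_pmf.2; rewrite big1 => [/eqP|w]; last by have := T0 w.
  by rewrite eq_sym oner_eq0.
exact: (MI_obs_sumH theta adj_sym c_gt0 P_pmf sum_lt_p data_indep i_honest).
Qed.
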